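(* For every positive integer $n$, every nonzero real root of $D(F_n,x)=(2x+x^2)^n+x(1+x)^{2n}$ lies in the open interval $(-2,0)$. Moreover, for every even positive integer $n$, $D(F_n,x)$ has at least two real roots in $(-2,0)$, neither of which equals $-1$ (more precisely, at least one in $(-2,-1)$ and at least one in $(-1,0)$). *)

From Stdlib Require Import Reals.
Open Scope R_scope.

Definition DF (n : nat) (x : R) : R :=
  (2 * x + x ^ 2) ^ n + x * (1 + x) ^ (2 * n).

From Stdlib Require Import Reals Lra Lia.
Open Scope R_scope.

(* Write u = 2x + x^2 = (1+x)^2 - 1 and v = (1+x)^2, so that
   D(F_n, x) = u^n + x v^n  with  0 <= u <= v  outside (-2, 0).
   - Root localisation.  For x > 0 both terms are positive.  For x <= -2
     we have 0 <= u <= v, hence u^n + x v^n <= (1 + x) v^n < 0.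
   - Roots for even n = 2m.  Then D(F_n, -2) = -2, D(F_n, -1) = 1, and
     D(F_n, -1/8) = (225/4096)^m - (1/8) (2401/4096)^m < 0 because
     225 * 8 < 2401.  The intermediate value theorem, in a strict form
     (the root is never an endpoint, where the value is nonzero), gives a
     root in (-2, -1) and one in (-1, -1/8). *)

Lemma DF_uv (n : nat) (x : R) :
  DF n x = (2 * x + x ^ 2) ^ n + x * ((1 + x) ^ 2) ^ n.
Proof. unfold DF. now rewrite pow_mult. Qed.

Lemma DF_continuous (n : nat) : continuity (DF n).
Proof. apply derivable_continuous. unfold DF. reg. Qed.

Lemma IVT_strict (f : R -> R) (a b : R) :
  continuity f -> a < b -> f a < 0 -> 0 < f b ->
  exists c, a < c < b /\ f c = 0.
Proof.
  intros Hf Hab Ha Hb.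
  destruct (IVT f a b Hf Hab Ha Hb) as [c [[Hac Hcb] Hc]].
  exists c. split; [|exact Hc].
  split.
  - destruct Hac as [Hac|Heq]; [exact Hac|subst c; lra].
  - destruct Hcb as [Hcb|Heq]; [exact Hcb|subst c; lra].
Qed.

Lemma IVT_strict_rev (f : R -> R) (a b : R) :
  continuity f -> a < b -> 0 < f a -> f b < 0 ->
  exists c, a < c < b /\ f c = 0.
Proof.
  intros Hf Hab Ha Hb.
  destruct (IVT_strict (- f)%F a b) as [c [Hc Hc0]];
    [now apply continuity_opp | exact Hab | unfold opp_fct; lra
    | unfold opp_fct; lra |].
  exists c. split; [exact Hc|]. unfold opp_fct in Hc0. lra.
Qed.

Lemma DF_pos (n : nat) (x : R) : 0 < x -> 0 < DF n x.
Proof.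
  intros Hx. rewrite DF_uv.
  assert (0 < (2 * x + x ^ 2) ^ n) by (apply pow_lt; nra).
  assert (0 < ((1 + x) ^ 2) ^ n) by (apply pow_lt; nra).
  nra.
Qed.

(* No root at or to the left of -2: there 0 <= u <= v. *)
Lemma DF_neg_left (n : nat) (x : R) : x <= -2 -> DF n x < 0.
Proof.
  intros Hx. rewrite DF_uv.
  assert (Huv : (2 * x + x ^ 2) ^ n <= ((1 + x) ^ 2) ^ n)
    by (apply pow_incr; nra).
  assert (0 < ((1 + x) ^ 2) ^ n) by (apply pow_lt; nra).
  nra.
Qed.

Lemma DF_even_at_minus2 (m : nat) : (0 < m)%nat -> DF (2 * m) (-2) = -2.
Proof.
  intros Hm. unfold DF.
  replace (2 * -2 + (-2) ^ 2) with 0 by ring.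
  replace (1 + -2) with (-1) by ring.
  rewrite pow_1_even, pow_i by lia. ring.
Qed.

Lemma DF_even_at_minus1 (m : nat) : (0 < m)%nat -> DF (2 * m) (-1) = 1.
Proof.
  intros Hm. unfold DF.
  replace (2 * -1 + (-1) ^ 2) with (-1) by ring.
  replace (1 + -1) with 0 by ring.
  rewrite pow_1_even, pow_i by lia. ring.
Qed.

(* At x = -1/8, u^2 = 225/4096 and v^2 = 2401/4096; since u^2 <= v^2,
   (u^2)^(k+1) <= u^2 (v^2)^k, and u^2 - v^2/8 < 0 gives a negative value. *)
Lemma DF_even_at_minus_eighth (m : nat) :
  (0 < m)%nat -> DF (2 * m) (-1/8) < 0.
Proof.
  intros Hm. destruct m as [|k]; [lia|].
  rewrite DF_uv, !pow_mult.
  replace ((2 * (-1/8) + (-1/8) ^ 2) ^ 2) with (225/4096) by field.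
  replace (((1 + -1/8) ^ 2) ^ 2) with (2401/4096) by field.
  assert (Hk : (225/4096) ^ k <= (2401/4096) ^ k) by (apply pow_incr; lra).
  assert (0 < (2401/4096) ^ k) by (apply pow_lt; lra).
  simpl. nra.
Qed.

Theorem mainTheorem3 :
  (forall (n : nat) (x : R), (0 < n)%nat -> x <> 0 -> DF n x = 0 ->
     -2 < x < 0) /\
  (forall n : nat, (0 < n)%nat -> Nat.Even n ->
     (exists x : R, -2 < x < -1 /\ DF n x = 0) /\
     (exists y : R, -1 < y < 0 /\ DF n y = 0)).
Proof.
  split.
  - intros n x _ Hx Hroot.
    destruct (Rle_or_lt x (-2)) as [Hl|Hl].
    { pose proof (DF_neg_left n x Hl). lra. }
    destruct (Rlt_or_le 0 x) as [Hr|Hr].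
    { pose proof (DF_pos n x Hr). lra. }
    lra.
  - intros n Hn [m ->].
    assert (Hm : (0 < m)%nat) by lia.
    split.
    + apply IVT_strict; [apply DF_continuous | lra | |].
      * rewrite DF_even_at_minus2 by exact Hm. lra.
      * rewrite DF_even_at_minus1 by exact Hm. lra.
    + destruct (IVT_strict_rev (DF (2 * m)) (-1) (-1/8)) as [y [Hy Hy0]].
      * apply DF_continuous.
      * lra.
      * rewrite DF_even_at_minus1 by exact Hm. lra.
      * now apply DF_even_at_minus_eighth.
      * exists y. split; [lra | exact Hy0].
Qed.
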